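(* Let $\mathcal{A}$ and $\mathcal{B}$ be unital algebras over a field of characteristic zero, let $\mathcal{M}$ be an $(\mathcal{A},\mathcal{B})$-bimodule which is faithful as a left $\mathcal{A}$-module and as a right $\mathcal{B}$-module, and let $\mathcal{T}=Tri(\mathcal{A},\mathcal{M},\mathcal{B})$ be the associated (unital) triangular algebra, with identity $\mathbf{1}$ and center $Z(\mathcal{T})$. Let $n>1$ be an integer and let $\Psi:\mathcal{T}\to\mathcal{T}$ be a linear mapping satisfying \[ 2\Psi(X^n)=X^{n-1}\Psi(X)+\Psi(X)X^{n-1}\quad\text{for all } X\in\mathcal{T}. \] If $\Psi(\mathbf{1})\in Z(\mathcal{T})$, then $\Psi$ is a two-sided centralizer.
   Context: The triangular algebra $Tri(\mathcal{A},\mathcal{M},\mathcal{B})$ is the set of matrices $\begin{bmatrix} a & m\\ 0 & b\end{bmatrix}$ with $a\in\mathcal{A}$, $m\in\mathcal{M}$, $b\in\mathcal{B}$, under the usual matrix operations. Its center is $Z(\mathcal{T})=\{a\oplus b: a\in Z(\mathcal{A}),\ b\in Z(\mathcal{B}),\ am=mb \text{ for all } m\in\mathcal{M}\}$. An additive map $T:\mathcal{T}\to\mathcal{T}$ is a two-sided centralizer if $T(XY)=T(X)Y=XT(Y)$ for all $X,Y\in\mathcal{T}$. *)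

From HB Require Import structures.
From mathcomp Require Import all_boot all_order all_algebra.
Set Implicit Arguments. Unset Strict Implicit. Unset Printing Implicit Defensive.
Import GRing.Theory.
Local Open Scope ring_scope.

(* Triangular algebra Tri(A, M, B): elements are triples (a, m, b), i.e.
   the matrix [[a, m], [0, b]].  The carrier is the product F-module
   A * M * B (MathComp's canonical product lmodType). *)

Section Tri.
Variables (F : fieldType) (A B : algType F) (M : lmodType F).
Variable la : A -> M -> M.
Variable ra : M -> B -> M.

Definition bimodule : Prop :=
  (forall a m1 m2, la a (m1 + m2) = la a m1 + la a m2) /\
      (forall a1 a2 m, la (a1 + a2) m = la a1 m + la a2 m) /\
      (forall a1 a2 m, la (a1 * a2) m = la a1 (la a2 m)) /\
      (forall m, la 1 m = m) /\
      (forall (k : F) a m, la (k *: a) m = k *: la a m /\ la a (k *: m) = k *: la a m) /\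
      (forall b m1 m2, ra (m1 + m2) b = ra m1 b + ra m2 b) /\
      (forall b1 b2 m, ra m (b1 + b2) = ra m b1 + ra m b2) /\
      (forall b1 b2 m, ra m (b1 * b2) = ra (ra m b1) b2) /\
      (forall m, ra m 1 = m) /\
      (forall (k : F) b m, ra m (k *: b) = k *: ra m b /\ ra (k *: m) b = k *: ra m b) /\
      (forall a m b, la a (ra m b) = ra (la a m) b).

Definition faithful_left : Prop := forall a, (forall m, la a m = 0) -> a = 0.
Definition faithful_right : Prop := forall b, (forall m, ra m b = 0) -> b = 0.

Definition tri := (A * M * B)%type.

Definition tri_mul (X Y : tri) : tri :=
  let: (a, m, b) := X in let: (a', m', b') := Y in
  (a * a', la a m' + ra m b', b * b').

Definition tri_one : tri := (1, 0, 1).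

Definition tri_exp (X : tri) (n : nat) : tri := iter n (tri_mul X) tri_one.

Definition tri_center (Z : tri) : Prop :=
  exists a b, [/\ Z = (a, 0, b),
    (forall x : A, a * x = x * a),
    (forall y : B, b * y = y * b)
  & (forall m, la a m = ra m b)].

(* two-sided centralizer (additivity is part of the linear type) *)
Definition two_sided_centralizer (T : tri -> tri) : Prop :=
  forall X Y, T (tri_mul X Y) = tri_mul (T X) Y /\ tri_mul (T X) Y = tri_mul X (T Y).
End Tri.

From HB Require Import structures.
From mathcomp Require Import all_boot all_order all_algebra.
Set Implicit Arguments. Unset Strict Implicit. Unset Printing Implicit Defensive.
Import GRing.Theory.
Local Open Scope ring_scope.

(* Substitute X = t Y + 1 in the identity.  Both sides are polynomials in the
   scalar t with coefficients in the algebra, and in characteristic zero the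
   points t = 0, 1, ..., n are distinct, so a Vandermonde argument lets us
   compare coefficients.  The coefficient of t reads
     2n Psi(Y) = 2 Psi(Y) + (n - 1) (Y Psi(1) + Psi(1) Y),
   which, Psi(1) being central, says Psi(Y) = Psi(1) Y; left multiplication by
   a central element is a two-sided centralizer. *)

Lemma sum_exprZ_eq0 (F : fieldType) (V : lmodType F) N (e : 'I_N -> V) :
  [pchar F] =i pred0 -> (forall t : F, \sum_(j < N) t ^+ j *: e j = 0) ->
  forall k, e k = 0.
Proof.
move=> /pcharf0P charF e_eq0 k.
pose W := Vandermonde N (\row_(j < N) (j%:R : F)).
have W_unit : W \in unitmx.
  rewrite unitmxE det_Vandermonde unitfE; apply/prodf_neq0 => i _.
  apply/prodf_neq0 => j lt_ij; rewrite !mxE -natrB ?(ltnW lt_ij) // charF.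
  by rewrite subn_eq0 -ltnNge.
have We_eq0 j : \sum_(l < N) W l j *: e l = 0.
  by rewrite -[RHS](e_eq0 j%:R); apply: eq_bigr => l _; rewrite !mxE.
transitivity (\sum_(l < N) (W *m invmx W) l k *: e l).
  rewrite mulmxV // (bigD1 k) //= big1 => [|l /negbTE nkl].
    by rewrite mxE eqxx scale1r addr0.
  by rewrite mxE nkl scale0r.
under eq_bigr => l _ do rewrite mxE scaler_suml.
rewrite exchange_big big1 //= => j _.
transitivity (invmx W j k *: \sum_(l < N) W l j *: e l).
  by rewrite scaler_sumr; apply: eq_bigr => l _; rewrite scalerA mulrC.
by rewrite We_eq0 scaler0.
Qed.

Lemma pchar0_mulrnI (F : fieldType) (V : lmodType F) k :
  [pchar F] =i pred0 -> (0 < k)%N -> injective (fun v : V => v *+ k).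
Proof.
move=> /pcharf0P charF k_gt0 u v /= eq_uv.
by apply: (@scalerI _ _ k%:R); rewrite ?charF -?lt0n //= !scaler_nat.
Qed.

Lemma coef1M (R : nzRingType) (p q : {poly R}) :
  (p * q)`_1 = p`_0 * q`_1 + p`_1 * q`_0.
Proof. by rewrite coefM !big_ord_recl big_ord0 addr0. Qed.

Lemma coef_linear_exp (R : nzRingType) (c : R) k j :
  ((c%:P * 'X + 1) ^+ k)`_j = c ^+ j *+ 'C(k, j).
Proof.
rewrite exprD1n coef_sum.
have cX : GRing.comm c%:P 'X by exact: commr_polyX.
under eq_bigr => i _ do rewrite (exprMn_comm _ cX) -polyC_exp coefMn coefCM coefXn.
rewrite (eq_bigr (fun i : 'I_k.+1 => if i == j :> nat then c ^+ j *+ 'C(k, j) else 0)).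
  rewrite -big_mkcond (big_ord1_eq _ (fun=> c ^+ j *+ 'C(k, j))).
  by case: ltnP => // lt_kj; rewrite bin_small ?mulr0n.
by move=> i _; rewrite eq_sym; case: eqP => [->|_]; rewrite ?mulr1 ?mulr0 ?mul0rn.
Qed.

Section HornerAtScalars.
Variable F : fieldType.

Lemma horner_scalar_wide (R : algType F) N (p : {poly R}) (k : F) :
  (size p <= N)%N -> p.[k%:A] = \sum_(i < N) k ^+ i *: p`_i.
Proof.
move=> le_pN; rewrite (horner_coef_wide _ le_pN); apply: eq_bigr => i _.
by rewrite exprZn expr1n mulr_algr.
Qed.

Lemma horner_scalar_map (R S : algType F) (f : {linear R -> S}) p (k : F) :
  (map_poly f p).[k%:A] = f p.[k%:A].
Proof.
have le_fp_p : (size (map_poly f p) <= size p)%N := size_poly _ _.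
rewrite (horner_scalar_wide k le_fp_p) (horner_scalar_wide k (leqnn _)) linear_sum.
by apply: eq_bigr => i _; rewrite coef_map linearZ.
Qed.

Lemma poly_scalar_eq0 (R : algType F) (p : {poly R}) :
  [pchar F] =i pred0 -> (forall t : F, p.[t%:A] = 0) -> p = 0.
Proof.
move=> charF p_eq0; apply/polyP => i; rewrite coef0.
have [lt_ip | ] := ltnP i (size p); last exact: nth_default.
pose e (j : 'I_(size p)) := p`_j.
apply: (sum_exprZ_eq0 (e := e) charF _ (Ordinal lt_ip)) => t.
by rewrite -horner_scalar_wide.
Qed.
End HornerAtScalars.

Section JordanPowerIdentity.
Variables (F : fieldType) (R : algType F) (Psi : {linear R -> R}) (n : nat).
Hypothesis charF : [pchar F] =i pred0.
Hypothesis n_gt1 : (1 < n)%N.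
Hypothesis Psi_pow : forall X : R,
  Psi (X ^+ n) *+ 2 = X ^+ n.-1 * Psi X + Psi X * X ^+ n.-1.
Hypothesis Psi1_central : forall X : R, Psi 1 * X = X * Psi 1.

Lemma Psi_eq_Psi1_mul Y : Psi Y = Psi 1 * Y.
Proof.
pose P : {poly R} := Y%:P * 'X + 1.
pose Q : {poly R} := (Psi Y)%:P * 'X + (Psi 1)%:P.
have P_at t : P.[t%:A] = t *: Y + 1.
  by rewrite !hornerE_comm mulr_algr.
have Q_at t : Q.[t%:A] = Psi (t *: Y + 1).
  by rewrite hornerD hornerMX !hornerC mulr_algr linearD linearZ.
have comm_at t (p : {poly R}) : comm_poly p t%:A by exact: comm_alg.
have D_eq0 : map_poly Psi (P ^+ n) *+ 2 - (P ^+ n.-1 * Q + Q * P ^+ n.-1) = 0.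
  apply: poly_scalar_eq0 => // t.
  rewrite hornerD hornerN hornerMn hornerD !hornerM_comm // horner_scalar_map.
  by rewrite !horner_exp_comm // P_at Q_at Psi_pow subrr.
have := congr1 (fun p : {poly R} => p`_1) D_eq0.
rewrite coef0 coefB coefMn coef_map coefD !coef1M !coef_linear_exp.
rewrite !coefD !coefCM !coefX !coefC /= mulr1 mulr0 add0r addr0.
rewrite expr1 expr0 bin0 !bin1 mulr1n mul1r mulr1 linearMn mulrnAl mulrnAr.
rewrite -Psi1_central; set a := Psi Y; set b := Psi 1 * Y.
have [m n_eq] : exists m, n = m.+2 by exists n.-2; case: n n_gt1 => [|[|]].
rewrite n_eq /= => /eqP; rewrite subr_eq0 => /eqP.
rewrite mulrSr mulrnDl [a + _]addrC -mulr2n mulrnDl => /addIr.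
by rewrite -!mulrnA; apply: pchar0_mulrnI.
Qed.

Lemma Psi_two_sided_centralizer X Y : Psi (X * Y) = Psi X * Y /\ Psi X * Y = X * Psi Y.
Proof.
rewrite (Psi_eq_Psi1_mul (X * Y)) (Psi_eq_Psi1_mul X) (Psi_eq_Psi1_mul Y) !mulrA.
by split; last rewrite Psi1_central.
Qed.
End JordanPowerIdentity.

Section TriangularAlgebra.
Variables (F : fieldType) (A B : algType F) (M : lmodType F).
Variables (la : A -> M -> M) (ra : M -> B -> M).
Hypotheses
  (laDr : forall a m1 m2, la a (m1 + m2) = la a m1 + la a m2)
  (laDl : forall a1 a2 m, la (a1 + a2) m = la a1 m + la a2 m)
  (laM : forall a1 a2 m, la (a1 * a2) m = la a1 (la a2 m))
  (la1 : forall m, la 1 m = m)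
  (laZ : forall (k : F) a m, la (k *: a) m = k *: la a m /\ la a (k *: m) = k *: la a m)
  (raDl : forall b m1 m2, ra (m1 + m2) b = ra m1 b + ra m2 b)
  (raDr : forall b1 b2 m, ra m (b1 + b2) = ra m b1 + ra m b2)
  (raM : forall b1 b2 m, ra m (b1 * b2) = ra (ra m b1) b2)
  (ra1 : forall m, ra m 1 = m)
  (raZ : forall (k : F) b m, ra m (k *: b) = k *: ra m b /\ ra (k *: m) b = k *: ra m b)
  (lara : forall a m b, la a (ra m b) = ra (la a m) b).

Lemma la0r a : la a 0 = 0.
Proof. by apply: (addrI (la a 0)); rewrite -laDr !addr0. Qed.

Lemma ra0l b : ra 0 b = 0.
Proof. by apply: (addrI (ra 0 b)); rewrite -raDl !addr0. Qed.

(* The algebra structure on [tri_alg] depends on [la], [ra] and the bimodule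
   axioms, so it is only usable inside this section. *)
Definition tri_alg : Type := tri A B M.
HB.instance Definition _ := GRing.Lmodule.on tri_alg.

Let mul : tri_alg -> tri_alg -> tri_alg := tri_mul la ra.
Let one : tri_alg := tri_one A B M.

Lemma tri_mulA : associative mul.
Proof.
move=> [[a1 m1] b1] [[a2 m2] b2] [[a3 m3] b3].
by rewrite /mul /= !mulrA laDr raDl laM raM lara addrA.
Qed.

Lemma tri_mul1r : left_id one mul.
Proof. by move=> [[a m] b]; rewrite /mul /one /= !mul1r la1 ra0l addr0. Qed.

Lemma tri_mulr1 : right_id one mul.
Proof. by move=> [[a m] b]; rewrite /mul /one /= !mulr1 ra1 la0r add0r. Qed.

Lemma tri_mulDl : left_distributive mul +%R.
Proof.
move=> [[a1 m1] b1] [[a2 m2] b2] [[a3 m3] b3].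
by rewrite /mul /= !mulrDl laDl raDl addrACA.
Qed.

Lemma tri_mulDr : right_distributive mul +%R.
Proof.
move=> [[a1 m1] b1] [[a2 m2] b2] [[a3 m3] b3].
by rewrite /mul /= !mulrDr laDr raDr addrACA.
Qed.

Lemma tri_one_neq0 : one != 0.
Proof. by apply/negP => /eqP[/eqP]; rewrite oner_eq0. Qed.

Let triZ (k : F) a m b : k *: ((a, m, b) : tri_alg) = (k *: a, k *: m, k *: b).
Proof. by []. Qed.

Lemma tri_scalerAl (k : F) (X Y : tri_alg) : k *: mul X Y = mul (k *: X) Y.
Proof.
move: X Y => [[a1 m1] b1] [[a2 m2] b2].
by rewrite /mul /= !triZ -!scalerAl (laZ _ _ _).1 (raZ _ _ _).2 scalerDr.
Qed.

Lemma tri_scalerAr (k : F) (X Y : tri_alg) : k *: mul X Y = mul X (k *: Y).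
Proof.
move: X Y => [[a1 m1] b1] [[a2 m2] b2].
by rewrite /mul /= !triZ -!scalerAr (laZ _ _ _).2 (raZ _ _ _).1 scalerDr.
Qed.

HB.instance Definition _ := GRing.Zmodule_isNzRing.Build tri_alg
  tri_mulA tri_mul1r tri_mulr1 tri_mulDl tri_mulDr tri_one_neq0.

HB.instance Definition _ := GRing.Lmodule_isLalgebra.Build F tri_alg tri_scalerAl.
HB.instance Definition _ := GRing.Lalgebra_isAlgebra.Build F tri_alg tri_scalerAr.

Lemma tri_expE (X : tri_alg) k : tri_exp la ra X k = X ^+ k.
Proof. by elim: k => // k IHk; rewrite exprS -IHk. Qed.

Lemma tri_center_comm (Z : tri_alg) :
  tri_center la ra Z -> forall X : tri_alg, Z * X = X * Z.
Proof.
move=> [a [b [-> a_central b_central la_ra]]] [[x1 m] x3].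
by rewrite /GRing.mul /= a_central b_central ra0l la0r addr0 add0r la_ra.
Qed.

Lemma tri_two_sided_centralizer n (Psi : {linear tri A B M -> tri A B M}) :
  [pchar F] =i pred0 -> (1 < n)%N ->
  (forall X, Psi (tri_exp la ra X n) *+ 2 =
     tri_mul la ra (tri_exp la ra X n.-1) (Psi X) +
     tri_mul la ra (Psi X) (tri_exp la ra X n.-1)) ->
  tri_center la ra (Psi (tri_one A B M)) ->
  two_sided_centralizer la ra Psi.
Proof.
move=> charF n_gt1 Psi_pow /tri_center_comm Psi1_central X Y.
apply: (@Psi_two_sided_centralizer F tri_alg Psi n) => // {}X.
by rewrite -!tri_expE.
Qed.
End TriangularAlgebra.

Theorem corollary2p5 (F : fieldType) (A B : algType F) (M : lmodType F)
  (la : A -> M -> M) (ra : M -> B -> M) (n : nat)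
  (Psi : {linear tri A B M -> tri A B M}) :
  [pchar F] =i pred0 ->
  bimodule la ra -> faithful_left la -> faithful_right ra ->
  (1 < n)%N ->
  (forall X : tri A B M,
     Psi (tri_exp la ra X n) *+ 2 =
     tri_mul la ra (tri_exp la ra X n.-1) (Psi X) +
     tri_mul la ra (Psi X) (tri_exp la ra X n.-1)) ->
  tri_center la ra (Psi (tri_one A B M)) ->
  two_sided_centralizer la ra Psi.
Proof.
move=> charF [laDr [laDl [laM [la1 [laZ [raDl [raDr [raM [ra1 [raZ lara]]]]]]]]]] _ _.
exact: (tri_two_sided_centralizer laDr laDl laM la1 laZ raDl raDr raM ra1 raZ lara).
Qed.
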